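(* Let $G_w$ be a half wheel graph with center $w_c$ and outer nodes $w_1,\dots,w_n$, i.e., a directed graph on these nodes with exactly one edge (of arbitrary orientation) between $w_c$ and $w_k$ for each $k\in\{1,\dots,n\}$ and exactly one edge (of arbitrary orientation) between $w_k$ and $w_{k+1}$ for each $k\in\{1,\dots,n-1\}$. Let $G^{\mathcal X}_w$ be any extraction order of $G_w$ rooted at $w_c$, and let $\mathrm{VC}=\{w_k:(w_{k-1},w_k)\in E^{\mathcal X}_w\text{ or }(w_{k+1},w_k)\in E^{\mathcal X}_w\}$. Then $\mathrm{ew}_{\mathcal X}(G^{\mathcal X}_w)=|\mathrm{VC}|+1$.
   Context: An extraction order of a directed graph $G=(V,E)$ is a rooted directed acyclic graph $G^{\mathcal X}=(V,E^{\mathcal X},s)$ in which every node is reachable from $s$ and $E^{\mathcal X}$ is obtained from $E$ by reversing some (possibly no) edges. A confluence from $a$ to $b$ is a pair of directed paths in $E^{\mathcal X}$ from $a$ to $b$ sharing no node other than $a,b$. For $e\in E^{\mathcal X}$, its label set $\mathcal L_e$ is the set of nodes $b$ such that $e$ lies on some confluence with target $b$. Each node's outgoing edges are partitioned into bags: classes of the equivalence relation generated by $e\sim e'$ iff $\mathcal L_e\cap\mathcal L_{e'}\neq\emptyset$; bag label set $\mathcal L_B=\bigcup_{e\in B}\mathcal L_e$. The extraction width is $\mathrm{ew}_{\mathcal X}(G^{\mathcal X})=1+\max|\mathcal L_B|$ over all bags of all nodes. *)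

From mathcomp Require Import all_boot.
From mathcomp Require Import boolp.
Set Implicit Arguments. Unset Strict Implicit. Unset Printing Implicit Defensive.

Section ExtractionWidth.
Variable V : finType.

Definition acyclic (EX : rel V) : Prop :=
  forall x y, EX x y -> ~~ connect EX y x.

(** EX is an extraction order of (V,E) rooted at s: EX is obtained from E by
    reversing some set R of edges of E, EX is acyclic and every node is
    reachable from s. *)
Definition extraction_order (E EX : rel V) (s : V) : Prop :=
  [/\ exists R : rel V, (forall x y, R x y -> E x y) /\
        (forall x y, EX x y = (E x y && ~~ R x y) || (E y x && R y x)),
      acyclic EX &
      forall x, connect EX s x].

Definition dpath (EX : rel V) (a b : V) (p : seq V) : bool :=
  path EX a p && (last a p == b).

Definition confluence (EX : rel V) (a b : V) (p1 p2 : seq V) : Prop :=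
  [/\ a != b, dpath EX a b p1, dpath EX a b p2, p1 != p2 &
      forall x, x \in a :: p1 -> x \in a :: p2 -> (x == a) || (x == b)].

Definition edge_on (a : V) (p : seq V) (u v : V) : Prop :=
  exists s1 s2, a :: p = s1 ++ u :: v :: s2.

Definition labels (EX : rel V) (u v : V) : {set V} :=
  [set b | `[< exists a p1 p2, confluence EX a b p1 p2 /\
                 (edge_on a p1 u v \/ edge_on a p2 u v) >]].

(** Relation on outgoing edges of u (identified by their heads):
    label sets intersect. *)
Definition overlap (EX : rel V) (u : V) : rel V :=
  fun v v' => [&& EX u v, EX u v' & [exists b, (b \in labels EX u v) && (b \in labels EX u v')]].

(** The bag of u containing the outgoing edge (u,v): its class under the
    equivalence generated by overlap (reflexive-transitive closure of a
    symmetric relation). *)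
Definition bag (EX : rel V) (u v : V) : {set V} :=
  [set v' | connect (overlap EX u) v v'].

Definition bag_labels (EX : rel V) (u v : V) : {set V} :=
  \bigcup_(v' in bag EX u v) labels EX u v'.

Definition ew (EX : rel V) : nat :=
  1 + \max_(u : V) \max_(v | EX u v) #|bag_labels EX u v|.

End ExtractionWidth.

(** Half wheel on n outer nodes: vertex type option 'I_n, with None = w_c
    and Some k = w_(k+1). *)
Definition hw_adj (n : nat) (x y : option 'I_n) : bool :=
  match x, y with
  | None, Some _ | Some _, None => true
  | Some k, Some l => (k.+1 == l :> nat) || (l.+1 == k :> nat)
  | None, None => false
  end.

Definition half_wheel (n : nat) (E : rel (option 'I_n)) : Prop :=
  [/\ forall k : 'I_n, E None (Some k) != E (Some k) None,
      forall k l : 'I_n, k.+1 = l :> nat -> E (Some k) (Some l) != E (Some l) (Some k) &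
      forall x y, E x y -> hw_adj x y].

Definition VC (n : nat) (EX : rel (option 'I_n)) : {set 'I_n} :=
  [set k : 'I_n | [exists l : 'I_n,
     ((l.+1 == k :> nat) || (k.+1 == l :> nat)) && EX (Some l) (Some k)]].

(** A label of any edge is the target of a confluence, and one of its two
    paths has length at least two; so the label has an in-neighbour which
    itself has an in-neighbour, i.e. is not the root.  In the half wheel this
    makes every label an outer node entered by a rim edge, i.e. a node of VC.
    Conversely, a rim edge [w_j -> w_k] together with the spokes from [w_c]
    forms a triangle confluence with target [w_k], which labels both spokes
    [w_c -> w_j] and [w_c -> w_k].  Consecutive spokes therefore overlap, all
    spokes lie in a single bag, and its label set contains all of VC. *)

From mathcomp Require Import all_boot.
From mathcomp Require Import boolp.

Set Implicit Arguments.
Unset Strict Implicit.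
Unset Printing Implicit Defensive.

Section ExtractionOrders.
Variable V : finType.

Lemma extraction_order_sym (E EX : rel V) s x y :
  extraction_order E EX s -> E x y -> EX x y || EX y x.
Proof.
case=> [[R [_ EXE]] _ _] Exy; rewrite !EXE Exy /=.
by case: (R x y); rewrite ?orbT.
Qed.

Lemma extraction_order_sub (E EX : rel V) s x y :
  extraction_order E EX s -> EX x y -> E x y || E y x.
Proof. by case=> [[R [_ ->]] _ _] /orP[] /andP[-> _]; rewrite ?orbT. Qed.

Lemma extraction_order_root (E EX : rel V) s x :
  extraction_order E EX s -> ~~ EX x s.
Proof. by case=> _ acEX reach; apply/negP => /acEX; rewrite reach. Qed.

Variable EX : rel V.

Lemma triangle_confluence a b c :
  acyclic EX -> EX a b -> EX a c -> EX b c ->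
  confluence EX a c [:: b; c] [:: c].
Proof.
move=> acEX ab ac bc; split.
- by apply/eqP => eq_ac; move: (acEX _ _ ac); rewrite eq_ac connect0.
- by rewrite /dpath /= ab bc eqxx.
- by rewrite /dpath /= ac eqxx.
- by rewrite eqseq_cons andbF.
- by move=> x _; rewrite !inE.
Qed.

Lemma triangle_labels a b c :
  acyclic EX -> EX a b -> EX a c -> EX b c ->
  c \in labels EX a b /\ c \in labels EX a c.
Proof.
move=> acEX ab ac bc; have conf := triangle_confluence acEX ab ac bc.
rewrite !inE; split; apply/asboolP; exists a, [:: b; c], [:: c]; split => //.
- by left; exists [::], [:: c].
- by right; exists [::], [::].
Qed.

Lemma long_dpath_pred a b p :
  a != b -> dpath EX a b p -> p != [:: b] -> exists2 c, EX c b & exists x, EX x c.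
Proof.
move=> neq_ab; case/lastP: p => [|q c]; first by rewrite /dpath /= (negbTE neq_ab).
rewrite /dpath rcons_path last_rcons => /andP[/andP[pq qc] /eqP <-].
case/lastP: q pq qc => [|q x]; first by rewrite eqxx.
rewrite rcons_path last_rcons => /andP[_ qx] xc _.
by exists x; last exists (last a q).
Qed.

Lemma mem_labels_pred u v b :
  b \in labels EX u v -> exists2 c, EX c b & exists x, EX x c.
Proof.
rewrite inE => /asboolP[a [p1 [p2 [[neq_ab path1 path2 p12 _] _]]]].
have [p1b | p1_long] := eqVneq p1 [:: b]; last exact: long_dpath_pred neq_ab path1 _.
by apply: long_dpath_pred neq_ab path2 _; rewrite eq_sym -p1b.
Qed.

Lemma overlapC u : symmetric (overlap EX u).
Proof.
move=> v v'; rewrite /overlap andbCA; congr [&& _, _ & _].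
by apply/existsP/existsP => -[b]; rewrite andbC; exists b.
Qed.

End ExtractionOrders.

Lemma connect_ord_succ (T : finType) n (f : 'I_n -> T) (r : rel T) :
  (forall i j : 'I_n, i.+1 = j :> nat -> r (f i) (f j)) ->
  forall i j : 'I_n, i <= j -> connect r (f i) (f j).
Proof.
move=> r_succ i [m lt_mn]; elim: m lt_mn => [|m IHm] lt_mn le_im.
  by have -> : i = Ordinal lt_mn by apply: val_inj; apply/eqP; rewrite -leqn0.
case: (ltngtP i m.+1) le_im => // [le_im | eq_im] _.
  exact: connect_trans (IHm (ltnW lt_mn) le_im) (connect1 (r_succ _ _ _)).
by have -> : i = Ordinal lt_mn by apply: val_inj.
Qed.

Lemma hw_adjC n : symmetric (@hw_adj n).
Proof. by case=> [a|] [b|] //=; rewrite orbC. Qed.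

Section HalfWheel.
Variables (n : nat) (E EX : rel (option 'I_n)).
Hypotheses (hwE : half_wheel E) (xoEX : extraction_order E EX None).

Lemma hw_EX_adj x y : EX x y -> hw_adj x y.
Proof.
case: hwE => _ _ adjE /(extraction_order_sub xoEX) /orP[] /adjE //.
by rewrite hw_adjC.
Qed.

Lemma hw_EX_center k : EX None (Some k).
Proof.
have rootEX x := negbTE (extraction_order_root x xoEX).
case: hwE => spokeE _ _; move: (spokeE k).
case eN: (E None (Some k)); case eS: (E (Some k) None) => // _.
  by have := extraction_order_sym xoEX eN; rewrite rootEX orbF.
by have := extraction_order_sym xoEX eS; rewrite rootEX.
Qed.

Lemma hw_EX_rim (k l : 'I_n) :
  k.+1 = l :> nat -> EX (Some k) (Some l) || EX (Some l) (Some k).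
Proof.
case: hwE => _ rimE _ /rimE.
case e1: (E (Some k) (Some l)); case e2: (E (Some l) (Some k)) => // _.
  exact: extraction_order_sym xoEX e1.
by rewrite orbC; apply: extraction_order_sym xoEX e2.
Qed.

Lemma hw_labels_sub u v : labels EX u v \subset Some @: VC EX.
Proof.
have rootEX x := negbTE (extraction_order_root x xoEX).
apply/subsetP => b /mem_labels_pred[c cb [x xc]].
case: c cb xc => [l|] cb xc; last by rewrite rootEX in xc.
case: b cb => [k|] cb; last by rewrite rootEX in cb.
apply: imset_f; rewrite inE; apply/existsP; exists l.
by rewrite cb andbT; apply: hw_EX_adj cb.
Qed.

Lemma hw_bag_labels_sub u v : bag_labels EX u v \subset Some @: VC EX.
Proof. by apply/subsetP => b /bigcupP[v' _]; apply/subsetP/hw_labels_sub. Qed.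

Lemma hw_overlap_rim (k l : 'I_n) :
  k.+1 = l :> nat -> overlap EX None (Some k) (Some l).
Proof.
have acEX : acyclic EX by case: xoEX.
have spoke := hw_EX_center.
move=> kl; rewrite /overlap !spoke; apply/existsP.
case/orP: (hw_EX_rim kl) => [EXkl | EXlk].
- have [] := triangle_labels acEX (spoke k) (spoke l) EXkl.
  by exists (Some l) => /=; apply/andP.
- have [] := triangle_labels acEX (spoke l) (spoke k) EXlk.
  by exists (Some k) => /=; apply/andP.
Qed.

Lemma hw_bag_center k l : Some l \in bag EX None (Some k).
Proof.
have chain := connect_ord_succ (f := Some) hw_overlap_rim.
rewrite inE; case: (leqP k l) => [/chain // | /ltnW/chain].
by rewrite (sym_connect_sym (@overlapC _ _ _)).
Qed.

Lemma hw_VC_sub_bag_labels k : Some @: VC EX \subset bag_labels EX None (Some k).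
Proof.
apply/subsetP => _ /imsetP[l /[!inE] /existsP[j /andP[_ EXjl]] ->].
apply/bigcupP; exists (Some l); first exact: hw_bag_center.
have acEX : acyclic EX by case: xoEX.
by case: (triangle_labels acEX (hw_EX_center j) (hw_EX_center l) EXjl).
Qed.

End HalfWheel.

Theorem lemma36 (n : nat) (E EX : rel (option 'I_n)) :
  half_wheel E -> extraction_order E EX None ->
  ew EX = #|VC EX| + 1.
Proof.
move=> hwE xoEX; rewrite /ew addnC -(card_imset (VC EX) (@Some_inj _)).
congr (_ + _); apply/eqP; rewrite eqn_leq; apply/andP; split.
- apply/bigmax_leqP => u _; apply/bigmax_leqP => v _.
  exact/subset_leq_card/(hw_bag_labels_sub hwE xoEX).
- have [->|[k _]] := set_0Vmem (VC EX); first by rewrite imset0 cards0.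
  apply: leq_trans (leq_bigmax None).
  apply: leq_trans (leq_bigmax_cond _ (hw_EX_center hwE xoEX k)).
  exact/subset_leq_card/(hw_VC_sub_bag_labels hwE xoEX).
Qed.
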